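(* Let $A=(A_{ij})$ be a real symmetric $n\times n$ matrix with eigenvalues $\lambda_1(A),\dots,\lambda_n(A)$, and let $$\mu=\frac1n\sum_{i=1}^n\lambda_i(A),\qquad \sigma^2=\frac1n\sum_{i=1}^n(\lambda_i(A)-\mu)^2,$$ with $\sigma>0$. If for some integer $k$ with $1\le k<n/2$ $$\frac1n\sum_{i\neq j}A_{ij}\ge\sigma\sqrt{\frac{(n-k)^2+k^2}{n}},$$ then the largest (rightmost) eigenvalue of $A$ is simple, and a corresponding eigenvector can be chosen (up to sign) so that it has at least $n-k+1$ nonnegative entries. *)

From HB Require Import structures.
From mathcomp Require Import all_boot all_order all_algebra.
Set Implicit Arguments. Unset Strict Implicit. Unset Printing Implicit Defensive.
Import Order.TTheory GRing.Theory Num.Theory.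
Local Open Scope ring_scope.

Definition eigenvalue_list (R : rcfType) (n : nat) (A : 'M[R]_n) (lam : 'I_n -> R) :=
  char_poly A = \prod_(i < n) ('X - (lam i)%:P).

Definition spec_mean (R : rcfType) (n : nat) (lam : 'I_n -> R) : R :=
  n%:R^-1 * \sum_(i < n) lam i.

Definition spec_var (R : rcfType) (n : nat) (lam : 'I_n -> R) : R :=
  n%:R^-1 * \sum_(i < n) (lam i - spec_mean lam) ^+ 2.

(* Diagonalise A in an orthonormal eigenbasis (u_i) and put w_i = <u_i, 1>^2:
   then w_i >= 0, sum_i w_i = n, and the off-diagonal sum of A is
   s = sum_i (lambda_i - mu) w_i.  By Cauchy-Schwarz s^2 <= n sigma^2 (sum_i w_i^2 - n),
   and s is at most its value with weight w_1 on the largest eigenvalue and n - w_1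
   on the second largest.  The hypothesis s^2 >= n sigma^2 ((n - k)^2 + k^2) leaves
   no room for anything else: if the largest eigenvalue is not simple, or w_1 <= n/2,
   then s^2 <= n sigma^2 n (n - 2) / 2; if n/2 < w_1 <= n - k, then
   sum_i w_i^2 <= w_1^2 + (n - w_1)^2 <= (n - k)^2 + k^2.  So the largest eigenvalue is
   simple and its unit eigenvector u has (sum_j u_j)^2 = w_1 > n - k.  Choosing the
   sign with sum_j u_j >= 0, Cauchy-Schwarz over the nonnegative entries shows that
   there are more than n - k of them. *)

From HB Require Import structures.
From mathcomp Require Import all_boot all_order all_algebra.
From mathcomp Require Import fingroup perm complex ring lra zify.
Import Order.TTheory GRing.Theory Num.Theory.
Local Open Scope ring_scope.
Local Open Scope sesquilinear_scope.
Set Implicit Arguments. Unset Strict Implicit. Unset Printing Implicit Defensive.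

Section SumInequalities.
Variable R : realFieldType.

Lemma cauchy_schwarz_sum (I : finType) (P : pred I) (a b : I -> R) :
  (\sum_(i | P i) a i * b i) ^+ 2 <=
  (\sum_(i | P i) a i ^+ 2) * (\sum_(i | P i) b i ^+ 2).
Proof.
set A := \sum_(i | P i) a i ^+ 2; set B := \sum_(i | P i) b i ^+ 2.
set S := \sum_(i | P i) a i * b i.
have B_ge0 : 0 <= B by apply: sumr_ge0 => i _; exact: sqr_ge0.
have [B0|B_neq0] := eqVneq B 0.
  have b0 i : P i -> b i = 0.
    move=> Pi; apply/eqP; rewrite -sqrf_eq0; apply/eqP.
    exact: (psumr_eq0P (fun j _ => sqr_ge0 (b j)) B0).
  rewrite /S big1 => [|i Pi]; last by rewrite b0 ?mulr0.
  by rewrite B0 mulr0 expr0n.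
(* [0 <= sum_i (a_i B - b_i S)^2 = B (A B - S^2)] *)
have : 0 <= \sum_(i | P i) (a i * B - b i * S) ^+ 2.
  by apply: sumr_ge0 => i _; exact: sqr_ge0.
have -> : \sum_(i | P i) (a i * B - b i * S) ^+ 2 = B * (A * B - S ^+ 2).
  rewrite (eq_bigr (fun i =>
    a i ^+ 2 * B ^+ 2 - a i * b i * (2 * B * S) + b i ^+ 2 * S ^+ 2)); last first.
    by move=> i _; ring.
  rewrite big_split sumrB /= -!mulr_suml -/A -/B -/S; ring.
by rewrite pmulr_rge0 ?lt_def ?B_neq0 // subr_ge0 mulrC.
Qed.

Lemma sqr_sum_le_card (I : finType) (P : pred I) (a : I -> R) :
  (\sum_(i | P i) a i) ^+ 2 <= #|P|%:R * \sum_(i | P i) a i ^+ 2.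
Proof.
have := cauchy_schwarz_sum P (fun _ => 1) a.
under eq_bigr do rewrite mul1r.
by rewrite sumr_const expr1n.
Qed.

Lemma sum_sqr_le_sqr_sum (I : finType) (P : pred I) (a : I -> R) :
  (forall i, P i -> 0 <= a i) ->
  \sum_(i | P i) a i ^+ 2 <= (\sum_(i | P i) a i) ^+ 2.
Proof.
move=> a_ge0; rewrite expr2 mulr_suml; apply: ler_sum => i Pi.
rewrite expr2 ler_wpM2l ?a_ge0 // (bigD1 i) //= lerDl.
by apply: sumr_ge0 => j /andP[Pj _]; exact: a_ge0.
Qed.

Lemma card_ge0_gt (I : finType) (a : I -> R) (m : nat) :
  0 <= \sum_i a i -> m%:R * \sum_i a i ^+ 2 < (\sum_i a i) ^+ 2 ->
  (m < #|[set i | (0 <= a i)%R]|)%N.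
Proof.
move=> sum_ge0 sum_gt; rewrite ltnNge; apply/negP => card_le.
set S := [set i | (0 <= a i)%R] in card_le.
have sum_leS : \sum_i a i <= \sum_(i in S) a i.
  rewrite (bigID [in S]) /= gerDl.
  by apply: sumr_le0 => i; rewrite inE -ltNge => /ltW.
have sumS_ge0 : 0 <= \sum_(i in S) a i by apply: sumr_ge0 => i; rewrite inE.
have sqrS_le : \sum_(i in S) a i ^+ 2 <= \sum_i a i ^+ 2.
  rewrite [X in _ <= X](bigID [in S]) /= lerDl.
  by apply: sumr_ge0 => i _; exact: sqr_ge0.
have card_sum_le : #|S|%:R * \sum_(i in S) a i ^+ 2 <= m%:R * \sum_i a i ^+ 2.
  by apply: ler_pM; rewrite ?ler_nat //; apply: sumr_ge0 => i _; exact: sqr_ge0.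
have : (\sum_i a i) ^+ 2 <= (\sum_(i in S) a i) ^+ 2 by rewrite ler_sqr ?nnegrE.
have := sqr_sum_le_card [in S] a.
lra.
Qed.

End SumInequalities.

Section TopWeight.
Variables (R : realFieldType) (n : nat) (b w : 'I_n -> R).
Hypotheses (sum_b : \sum_i b i = 0) (w_ge0 : forall i, 0 <= w i)
  (sum_w : \sum_i w i = n%:R).
Local Notation V := (\sum_i b i ^+ 2).
Local Notation s := (\sum_i b i * w i).

Lemma sqr_weighted_sum_le : s ^+ 2 <= V * (\sum_i w i ^+ 2 - n%:R).
Proof.
have -> : \sum_i b i * w i = \sum_i b i * (w i - 1).
  by under [RHS]eq_bigr do rewrite mulrBr mulr1; rewrite sumrB sum_b subr0.
have -> : \sum_i w i ^+ 2 - n%:R = \sum_i (w i - 1) ^+ 2.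
  rewrite [RHS](eq_bigr (fun i => w i ^+ 2 - 2 * w i + 1)); last by move=> i _; ring.
  by rewrite big_split sumrB /= -mulr_sumr sum_w sumr_const card_ord; ring.
exact: cauchy_schwarz_sum.
Qed.

Lemma sum_rest_weights (i0 : 'I_n) : \sum_(i | i != i0) w i = n%:R - w i0.
Proof. by rewrite -sum_w [in RHS](bigD1 i0) //= addrAC subrr add0r. Qed.

Lemma sum_sqr_weights_le (i0 : 'I_n) :
  \sum_i w i ^+ 2 <= w i0 ^+ 2 + (n%:R - w i0) ^+ 2.
Proof.
rewrite (bigD1 i0) //= lerD2l -sum_rest_weights.
by apply: sum_sqr_le_sqr_sum => i _.
Qed.

Lemma weighted_sum_le_top_two (i0 j1 : 'I_n) :
  (forall j, j != i0 -> b j <= b j1) ->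
  s <= b i0 * w i0 + b j1 * (n%:R - w i0).
Proof.
move=> b_le; rewrite (bigD1 i0) //= lerD2l -sum_rest_weights mulr_sumr.
by apply: ler_sum => j /b_le; apply: ler_wpM2r.
Qed.

Lemma sqr_pair_sum_le (i j : 'I_n) : i != j ->
  (b i + b j) ^+ 2 * n%:R <= 2 * V * (n%:R - 2).
Proof.
move=> neq_ij; pose P := [pred l | (l != i) && (l != j)].
have split_sum (F : 'I_n -> R) : \sum_l F l = F i + F j + \sum_(l | P l) F l.
  by rewrite (bigD1 i) //= (bigD1 j) 1?eq_sym //= addrA.
have card_P : #|P|%:R = n%:R - 2 :> R.
  have := split_sum (fun => 1); rewrite !sumr_const card_ord => ->; ring.
have sum_P : \sum_(l | P l) b l = - (b i + b j).
  by move: sum_b; rewrite split_sum; lra.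
have := sqr_sum_le_card P b; rewrite sum_P sqrrN card_P split_sum.
have : 0 <= \sum_(l | P l) b l ^+ 2 by apply: sumr_ge0 => l _; exact: sqr_ge0.
have : 0 <= n%:R - 2 :> R by rewrite -card_P ler0n.
have := sqr_ge0 (b i - b j).
nra.
Qed.

Variable k : nat.
Hypotheses (k_ge1 : (1 <= k)%N) (kn : (k.*2 < n)%N).
Local Notation c2 := ((n%:R - k%:R) ^+ 2 + k%:R ^+ 2).

Lemma sqr_spread_weighted_sum_lt (i j : 'I_n) : i != j ->
  0 < V -> 0 < s -> s <= (b i + b j) * n%:R / 2 -> s ^+ 2 < V * c2.
Proof.
move=> neq_ij V_gt0 s_gt0 s_le.
have knR : k%:R * 2 < n%:R :> R by rewrite -natrM ltr_nat muln2.
have : s ^+ 2 <= V * (n%:R * (n%:R - 2) / 2).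
  apply: le_trans (_ : ((b i + b j) * n%:R / 2) ^+ 2 <= _).
    by rewrite ler_sqr ?nnegrE //; lra.
  have -> : ((b i + b j) * n%:R / 2) ^+ 2 = (b i + b j) ^+ 2 * n%:R * (n%:R / 4).
    by field.
  apply: le_trans (ler_wpM2r _ (sqr_pair_sum_le neq_ij)) _.
    by rewrite divr_ge0 ?ler0n.
  by rewrite le_eqVlt; apply/orP; left; apply/eqP; field.
have : n%:R * (n%:R - 2) / 2 < c2 :> R.
  rewrite -subr_gt0 (_ : c2 - _ = ((n%:R - k%:R * 2) ^+ 2 + 2 * n%:R) / 2).
    apply: divr_gt0 => //; apply: ltr_wpDl; first exact: sqr_ge0.
    by rewrite mulr_gt0 // ltr0n; lia.
  by field.
by rewrite -(ltr_pM2l V_gt0); lra.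
Qed.

Lemma sqr_weighted_sum_lt_mid_weight (i0 : 'I_n) :
  k%:R <= w i0 <= n%:R - k%:R -> 0 < V -> s ^+ 2 < V * c2.
Proof.
move=> /andP[k_le_W W_le] V_gt0.
have : w i0 ^+ 2 + (n%:R - w i0) ^+ 2 <= c2.
  have : 0 <= (n%:R - k%:R - w i0) * (w i0 - k%:R) by apply: mulr_ge0; lra.
  nra.
have := sqr_weighted_sum_le; have := sum_sqr_weights_le i0.
have : 0 < V * n%:R by rewrite mulr_gt0 ?ltr0n //; lia.
nra.
Qed.

Lemma simple_max_heavy_weight : 0 < V -> 0 < s -> V * c2 <= s ^+ 2 ->
  exists i0, (forall j, j != i0 -> b j < b i0) /\ n%:R - k%:R < w i0.
Proof.
move=> V_gt0 s_gt0 s_ge.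
have n_gt0 : (0 < n)%N by lia.
have [i0 _ b_le] := arg_maxP b (isT : predT (Ordinal n_gt0)).
have /card_gt0P[j0 j0_neq] : (0 < #|[pred j | j != i0]|)%N.
  by rewrite cardC1 card_ord; lia.
have [j1 j1_neq b_le_j1] := @arg_maxP _ _ _ j0 [pred j | j != i0] b j0_neq.
set W := w i0.
have s_le : s <= b i0 * W + b j1 * (n%:R - W) := weighted_sum_le_top_two b_le_j1.
have not_spread : ~ s <= (b i0 + b j1) * n%:R / 2.
  move=> s_le_half; have neq_ij : i0 != j1 by rewrite eq_sym.
  by have := sqr_spread_weighted_sum_lt neq_ij V_gt0 s_gt0 s_le_half; rewrite ltNge s_ge.
have b_lt : b j1 < b i0.
  have b_j1_le : b j1 <= b i0 := b_le j1 isT.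
  rewrite lt_def b_j1_le andbT; apply/eqP => eq_b; apply: not_spread.
  by move: s_le; rewrite eq_b; lra.
have W_gt : n%:R / 2 < W.
  rewrite ltNge; apply/negP => W_le; apply: not_spread.
  have : 0 <= (b i0 - b j1) * (n%:R / 2 - W) by apply: mulr_ge0; lra.
  nra.
exists i0; split; first by move=> j /b_le_j1 /le_lt_trans; apply.
rewrite -/W ltNge; apply/negP => W_le.
have k_le_W : k%:R <= W.
  have knR : k%:R * 2 < n%:R :> R by rewrite -natrM ltr_nat muln2.
  by apply/ltW/(lt_trans _ W_gt); rewrite ltr_pdivlMr //; lra.
have mid_W : k%:R <= W <= n%:R - k%:R by rewrite k_le_W W_le.
by have := sqr_weighted_sum_lt_mid_weight mid_W V_gt0; rewrite ltNge s_ge.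
Qed.

End TopWeight.

Lemma sum_offdiag_mx (V : zmodType) n (B : 'M[V]_n) :
  \sum_i \sum_(j | j != i) B i j = \sum_i \sum_j B i j - \tr B.
Proof.
rewrite /mxtrace -sumrB; apply: eq_bigr => i _.
by rewrite [in RHS](bigD1 i) //= addrC addrK.
Qed.

Lemma char_poly_similar (F : fieldType) n (P Q M : 'M[F]_n) :
  Q *m P = 1%:M -> char_poly (Q *m M *m P) = char_poly M.
Proof.
move=> QP; have PQ : P *m Q = 1%:M by apply: mulmx1C.
have QP' : map_mx polyC Q *m map_mx polyC P = 1%:M by rewrite -map_mxM QP map_mx1.
rewrite /char_poly.
have -> : char_poly_mx (Q *m M *m P) =
    map_mx polyC Q *m char_poly_mx M *m map_mx polyC P.
  rewrite /char_poly_mx mulmxBr mulmxBl !map_mxM; congr (_ - _).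
  by rewrite scalar_mxC -mulmxA QP' mulmx1.
rewrite !det_mulmx mulrC mulrA -det_mulmx -map_mxM PQ map_mx1.
by rewrite det1 mul1r.
Qed.

Lemma prod_XsubC_perm (F : fieldType) n (a b : 'I_n -> F) :
  \prod_i ('X - (a i)%:P) = \prod_i ('X - (b i)%:P) ->
  exists p : 'S_n, forall i, a i = b (p i).
Proof.
move=> eq_prod.
have /tuple_permP[p ab] : perm_eq [tuple a i | i < n] [tuple b i | i < n].
  by apply: prod_XsubC_eq; rewrite !big_map.
exists p => i.
have /(congr1 (fun s => nth (a i) s i)) := ab.
by rewrite -!tnth_nth !tnth_mktuple.
Qed.

Lemma diag_eigenvector_eq0 (F : idomainType) n (d : 'rV[F]_n) (z : 'cV[F]_n) i0 :
  (forall j, j != i0 -> d 0 j != d 0 i0) -> diag_mx d *m z = d 0 i0 *: z ->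
  forall j, j != i0 -> z j 0 = 0.
Proof.
move=> d_simple /matrixP Dz j /d_simple; have := Dz j 0.
rewrite mul_diag_mx !mxE => /eqP; rewrite -subr_eq0 -mulrBl mulf_eq0 subr_eq0.
by case/orP=> [->|/eqP].
Qed.

Lemma trmxC_mul (C : numClosedFieldType) m n p (A : 'M[C]_(m, n)) (B : 'M[C]_(n, p)) :
  (A *m B)^t* = B^t* *m A^t*.
Proof. by rewrite trmx_mul map_mxM. Qed.

Section UnitaryConjugate.
Variables (C : numClosedFieldType) (n : nat) (P : 'M[C]_n) (d : 'rV[C]_n).
Hypothesis P_unitary : P \is unitarymx.
Local Notation M := (P^t* *m diag_mx d *m P).
Local Notation one := (const_mx 1 : 'cV[C]_n).
Local Notation y := (P *m one).

Lemma dot_colE (u v : 'cV[C]_n) : (u^t* *m v) 0 0 = \sum_i (u i 0)^* * v i 0.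
Proof. by rewrite mxE; apply: eq_bigr => i _; rewrite !mxE. Qed.

Lemma trmxC_mul_unitary : P^t* *m P = 1%:M.
Proof. by rewrite -[P^t*]mul1mx mulmxKtV. Qed.

Lemma unitary_dot (u v : 'cV[C]_n) : (P *m u)^t* *m (P *m v) = u^t* *m v.
Proof. by rewrite trmxC_mul -mulmxA (mulmxA _ P) trmxC_mul_unitary mul1mx. Qed.

Lemma sum_sqr_norm_unitary_one : \sum_i `|y i 0| ^+ 2 = n%:R.
Proof.
under eq_bigr do rewrite normCKC.
rewrite -dot_colE unitary_dot dot_colE.
by under eq_bigr do rewrite !mxE conjC1 mul1r; rewrite sumr_const card_ord.
Qed.

Lemma sum_entries_unitary_conj :
  \sum_i \sum_j M i j = \sum_i d 0 i * `|y i 0| ^+ 2.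
Proof.
transitivity ((one^t* *m M *m one) 0 0).
  rewrite mxE exchange_big; apply: eq_bigr => j _; rewrite !mxE big_distrl.
  by apply: eq_bigr => i _; rewrite !mxE /= conjC1 mul1r mulr1.
rewrite -!mulmxA mulmxA -trmxC_mul mulmxA mxE.
apply: eq_bigr => i _; rewrite mul_mx_diag !mxE normCKC; ring.
Qed.

Lemma trace_unitary_conj : \tr M = \sum_i d 0 i.
Proof.
by rewrite mxtrace_mulC mulmxA (unitarymxP P_unitary) mul1mx mxtrace_diag.
Qed.

Lemma simple_eigenvector_sum (i0 : 'I_n) (x : 'cV[C]_n) :
  (forall j, j != i0 -> d 0 j != d 0 i0) -> M *m x = d 0 i0 *: x ->
  `|\sum_j x j 0| ^+ 2 = `|y i0 0| ^+ 2 * \sum_j `|x j 0| ^+ 2.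
Proof.
move=> d_simple Mx; set z := P *m x.
have Dz : diag_mx d *m z = d 0 i0 *: z.
  move/(congr1 (mulmx P)): Mx.
  by rewrite !mulmxA (unitarymxP P_unitary) mul1mx -!mulmxA scalemxAr.
have z0 := diag_eigenvector_eq0 d_simple Dz.
have dot_z (u : 'cV[C]_n) : (u^t* *m x) 0 0 = ((P *m u) i0 0)^* * z i0 0.
  rewrite -unitary_dot dot_colE (bigD1 i0) //= big1 ?addr0 // => j /z0 ->.
  by rewrite mulr0.
have -> : \sum_j x j 0 = (y i0 0)^* * z i0 0.
  rewrite -dot_z dot_colE; apply: eq_bigr => j _.
  by rewrite !mxE conjC1 mul1r.
have -> : \sum_j `|x j 0| ^+ 2 = `|z i0 0| ^+ 2.
  by under eq_bigr do rewrite normCKC; rewrite -dot_colE dot_z normCKC.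
by rewrite normrM norm_conjC exprMn.
Qed.

End UnitaryConjugate.

Definition sym_eigenvalue (R : rcfType) n (A : 'M[R]_n) (i : 'I_n) : R :=
  complex.Re (spectral_diag (map_mx (real_complex R) A) 0 i).

(* The squared coordinate of the all-ones vector on the [i]-th vector of the
   orthonormal eigenbasis (the [i]-th row of [spectralmx]). *)
Definition sym_weight (R : rcfType) n (A : 'M[R]_n) (i : 'I_n) : R :=
  complex.Re (`|(spectralmx (map_mx (real_complex R) A) *m const_mx 1 : 'cV_n) i 0| ^+ 2).

(* MathComp's spectral theorem is stated over algebraically closed fields, so a real
   symmetric matrix is diagonalised as a hermitian matrix over R[i]. *)
Section RealSymmetric.
Variables (R : rcfType) (n : nat) (A : 'M[R]_n).
Hypothesis A_sym : A^T = A.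
Local Notation toC := (real_complex R).
Local Notation Ac := (map_mx toC A).
Local Notation P := (spectralmx Ac).
Local Notation d := (spectral_diag Ac).
Local Notation e := (sym_eigenvalue A).
Local Notation w := (sym_weight A).
Local Notation y := (P *m const_mx 1 : 'cV_n).

Lemma conj_real_complex (x : R) : (toC x)^* = toC x.
Proof. by apply: conj_Creal; rewrite complex_real. Qed.

Lemma sqr_norm_real_complex (x : R) : `|toC x| ^+ 2 = toC (x ^+ 2).
Proof. by rewrite normCKC conj_real_complex -rmorphM expr2. Qed.

Lemma map_sym_hermitian : Ac \is hermsymmx.
Proof.
apply/is_hermitianmxP; rewrite expr0 scale1r; apply/matrixP => i j.
by rewrite !mxE conj_real_complex -[in LHS]A_sym mxE.
Qed.

Lemma map_symE : Ac = P^t* *m diag_mx d *m P.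
Proof.
rewrite -invmx_unitary ?spectral_unitarymx //.
exact/orthomx_spectralP/hermitian_normalmx/map_sym_hermitian.
Qed.

Lemma spectral_diagE i : d 0 i = toC (e i).
Proof.
by rewrite RRe_real // (mxOverP (hermitian_spectral_diag_real map_sym_hermitian)).
Qed.

Lemma sym_weightE i : toC (w i) = `|y i 0| ^+ 2.
Proof. by rewrite RRe_real // realX ?normr_real. Qed.

Lemma sym_eigenvalue_list : eigenvalue_list A e.
Proof.
apply: (@map_poly_inj _ _ toC); rewrite map_char_poly map_symE.
rewrite char_poly_similar ?trmxC_mul_unitary ?spectral_unitarymx //.
rewrite char_poly_trig ?diag_mx_is_trig // rmorph_prod; apply: eq_bigr => i _.
by rewrite mxE eqxx mulr1n spectral_diagE /= map_polyXsubC.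
Qed.

Lemma sym_weight_ge0 i : 0 <= w i.
Proof. by have := exprn_ge0 2 (normr_ge0 (y i 0)); rewrite -sym_weightE ler0c. Qed.

Lemma sum_sym_weight : \sum_i w i = n%:R.
Proof.
apply: (@complexI R); rewrite rmorph_sum rmorph_nat.
rewrite -(sum_sqr_norm_unitary_one (spectral_unitarymx Ac)).
by apply: eq_bigr => i _; exact: sym_weightE.
Qed.

Lemma sum_offdiag_sym :
  \sum_i \sum_(j | j != i) A i j = \sum_i e i * w i - \sum_i e i.
Proof.
rewrite sum_offdiag_mx; apply: (@complexI R); rewrite !rmorphB !rmorph_sum /=.
congr (_ - _).
  transitivity (\sum_i \sum_j Ac i j).
    by apply: eq_bigr => i _; rewrite rmorph_sum; apply: eq_bigr => j _; rewrite mxE.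
  rewrite map_symE sum_entries_unitary_conj ?spectral_unitarymx //.
  by apply: eq_bigr => i _; rewrite spectral_diagE -sym_weightE rmorphM.
transitivity (\tr Ac); first by apply: eq_bigr => i _; rewrite mxE.
rewrite map_symE trace_unitary_conj ?spectral_unitarymx //.
by apply: eq_bigr => i _; rewrite spectral_diagE.
Qed.

Lemma sym_simple_eigenvector_sum i0 (v : 'cV[R]_n) :
  (forall j, j != i0 -> e j != e i0) -> A *m v = e i0 *: v ->
  (\sum_j v j 0) ^+ 2 = w i0 * \sum_j v j 0 ^+ 2.
Proof.
move=> e_simple Av.
have d_simple j : j != i0 -> d 0 j != d 0 i0.
  by rewrite !spectral_diagE (inj_eq (@complexI R)); exact: e_simple.
have Acv : P^t* *m diag_mx d *m P *m map_mx toC v = d 0 i0 *: map_mx toC v.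
  by rewrite -map_symE spectral_diagE -map_mxM Av map_mxZ.
have := simple_eigenvector_sum (spectral_unitarymx Ac) d_simple Acv.
have vE j : (map_mx toC v) j 0 = toC (v j 0) by rewrite mxE.
under eq_bigr do rewrite vE.
under [X in _ * X]eq_bigr do rewrite vE sqr_norm_real_complex.
rewrite -!rmorph_sum sqr_norm_real_complex -sym_weightE -rmorphM.
exact: (@complexI R).
Qed.

End RealSymmetric.

Lemma eigenvalue_list_weights (R : rcfType) n (A : 'M[R]_n) (lam : 'I_n -> R) :
  A^T = A -> eigenvalue_list A lam ->
  exists w : 'I_n -> R,
  [/\ forall i, 0 <= w i,
      \sum_i w i = n%:R,
      \sum_i \sum_(j | j != i) A i j = \sum_i lam i * w i - \sum_i lam i &
      forall i0 (v : 'cV[R]_n), (forall j, j != i0 -> lam j != lam i0) ->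
        A *m v = lam i0 *: v ->
        (\sum_j v j 0) ^+ 2 = w i0 * \sum_j v j 0 ^+ 2].
Proof.
move=> A_sym A_lam; set e := sym_eigenvalue A; set w := sym_weight A.
have [p lamE] : exists p : 'S_n, forall i, lam i = e (p i).
  by apply: prod_XsubC_perm; rewrite -A_lam sym_eigenvalue_list.
have reindex (F : 'I_n -> R) : \sum_i F (p i) = \sum_i F i.
  by rewrite [RHS](reindex_inj (@perm_inj _ p)).
exists (fun i => w (p i)); split.
- by move=> i; exact: sym_weight_ge0.
- by rewrite reindex sum_sym_weight.
- rewrite sum_offdiag_sym // -(reindex (fun i => e i * w i)) -(reindex e).
  by congr (_ - _); apply: eq_bigr => i _; rewrite lamE.
move=> i0 v lam_simple Av; apply: sym_simple_eigenvector_sum => //; rewrite -/e -lamE //.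
move=> j j_neq; rewrite -(permKV p j) -lamE lam_simple //.
by apply: contra j_neq => /eqP <-; rewrite permKV.
Qed.

Lemma sum_sub_spec_mean (R : rcfType) n (e : 'I_n -> R) :
  (0 < n)%N -> \sum_i (e i - spec_mean e) = 0.
Proof.
move=> n_gt0; rewrite sumrB sumr_const card_ord /spec_mean -[(_ * _) *+ n]mulr_natl.
by rewrite mulrA mulfV ?mul1r ?subrr // pnatr_eq0 -lt0n.
Qed.

Lemma weighted_sum_sub_spec_mean (R : rcfType) n (e w : 'I_n -> R) :
  (0 < n)%N -> \sum_i w i = n%:R ->
  \sum_i e i * w i - \sum_i e i = \sum_i (e i - spec_mean e) * w i.
Proof.
move=> n_gt0 sum_w; under [RHS]eq_bigr do rewrite mulrBl.
rewrite sumrB -mulr_sumr sum_w /spec_mean mulrAC mulVf ?mul1r //.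
by rewrite pnatr_eq0 -lt0n.
Qed.

Lemma sqrt_scaled_mul_le (R : rcfType) n (a c x : R) :
  (0 < n)%N -> 0 < c -> 0 < Num.sqrt (n%:R^-1 * a) ->
  Num.sqrt (n%:R^-1 * a) * Num.sqrt (c / n%:R) <= n%:R^-1 * x ->
  [/\ 0 < a, 0 < x & a * c <= x ^+ 2].
Proof.
move=> n_gt0 c_gt0; rewrite sqrtr_gt0 => na_gt0.
have ninv_gt0 : (0 : R) < n%:R^-1 by rewrite invr_gt0 ltr0n.
have nac_gt0 : 0 < n%:R^-1 * a * (c / n%:R).
  by rewrite mulr_gt0 // mulr_gt0 // invr_gt0 ltr0n.
rewrite -sqrtrM; last exact: ltW.
move=> le_x.
have nx_gt0 : 0 < n%:R^-1 * x by apply: lt_le_trans le_x; rewrite sqrtr_gt0.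
split; [by move: na_gt0; rewrite pmulr_rgt0 | by move: nx_gt0; rewrite pmulr_rgt0 |].
have : n%:R^-1 * a * (c / n%:R) <= (n%:R^-1 * x) ^+ 2.
  rewrite -(sqr_sqrtr (ltW nac_gt0)) ler_sqr // nnegrE ?sqrtr_ge0 //; exact: ltW.
rewrite (_ : _ * (c / n%:R) = n%:R^-1 ^+ 2 * (a * c)); last by ring.
by rewrite exprMn ler_pM2l ?exprn_gt0.
Qed.

Lemma eigenvalue_list_eigenvector (R : rcfType) n (A : 'M[R]_n) (lam : 'I_n -> R) i :
  A^T = A -> eigenvalue_list A lam ->
  exists2 v : 'cV_n, v != 0 & A *m v = lam i *: v.
Proof.
move=> A_sym A_lam; have : eigenvalue A (lam i).
  rewrite eigenvalue_root_char A_lam /root horner_prod (bigD1 i) //=.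
  by rewrite hornerXsubC subrr mul0r.
case/eigenvalueP => x xA x_neq0; exists x^T; first by rewrite trmx_eq0.
by rewrite -{1}A_sym -trmx_mul xA linearZ.
Qed.

Lemma sum_sqr_col_gt0 (R : realDomainType) n (v : 'cV[R]_n) :
  v != 0 -> 0 < \sum_i v i 0 ^+ 2.
Proof.
move=> v_neq0; rewrite lt_def sumr_ge0 ?andbT => [|i _]; last exact: sqr_ge0.
apply: contra v_neq0 => /eqP sum0; apply/eqP/colP => i; rewrite mxE.
apply/eqP; rewrite -sqrf_eq0; apply/eqP.
exact: (psumr_eq0P (fun j _ => sqr_ge0 (v j 0)) sum0).
Qed.

Lemma eigenvector_sum_ge0 (R : realFieldType) n (A : 'M[R]_n) a (v : 'cV_n) (m : nat) :
  v != 0 -> A *m v = a *: v ->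
  m%:R * \sum_i v i 0 ^+ 2 < (\sum_i v i 0) ^+ 2 ->
  exists v' : 'cV_n,
    [/\ v' != 0, A *m v' = a *: v' & (m < #|[set i | (0 <= v' i ord0)%R]|)%N].
Proof.
move=> v_neq0 Av sum_gt.
have [sum_ge0|sum_lt0] := leP 0 (\sum_i v i 0).
  by exists v; split => //; apply: card_ge0_gt.
exists (- v); split; first by rewrite oppr_eq0.
  by rewrite mulmxN Av scalerN.
have sum_negE : \sum_i (- v) i 0 = - \sum_i v i 0.
  by rewrite -sumrN; apply: eq_bigr => i _; rewrite mxE.
have sqr_negE : \sum_i (- v) i 0 ^+ 2 = \sum_i v i 0 ^+ 2.
  by apply: eq_bigr => i _; rewrite mxE sqrrN.
by apply: card_ge0_gt; rewrite sum_negE ?sqr_negE ?sqrrN // oppr_ge0 ltW.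
Qed.

Unset Implicit Arguments. Set Strict Implicit.

Theorem corollary8 (R : rcfType) (n k : nat) (A : 'M[R]_n) (lam : 'I_n -> R) :
  A^T = A ->
  eigenvalue_list A lam ->
  0 < Num.sqrt (spec_var lam) ->
  (1 <= k)%N -> (k.*2 < n)%N ->
  n%:R^-1 * (\sum_(i < n) \sum_(j < n | j != i) A i j)
    >= Num.sqrt (spec_var lam)
       * Num.sqrt (((n%:R - k%:R) ^+ 2 + k%:R ^+ 2) / n%:R) ->
  exists i0 : 'I_n,
    (forall j : 'I_n, j != i0 -> lam j < lam i0) /\
    exists v : 'cV[R]_n,
      [/\ v != 0, A *m v = lam i0 *: v &
          (n - k + 1 <= #|[set i : 'I_n | (0 <= v i ord0)%R]|)%N].
Proof.
move=> A_sym A_lam sigma_gt0 k_ge1 kn off_ge.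
have [w [w_ge0 sum_w offE eigE]] := eigenvalue_list_weights A_sym A_lam.
have n_gt0 : (0 < n)%N by lia.
have c_gt0 : 0 < (n%:R - k%:R) ^+ 2 + k%:R ^+ 2 :> R.
  by rewrite ltr_wpDl ?sqr_ge0 ?exprn_gt0 ?ltr0n.
rewrite offE weighted_sum_sub_spec_mean // in off_ge.
have [var_gt0 s_gt0 s_ge] := sqrt_scaled_mul_le n_gt0 c_gt0 sigma_gt0 off_ge.
have [i0 [centered_max w_heavy]] := simple_max_heavy_weight
  (sum_sub_spec_mean lam n_gt0) w_ge0 sum_w k_ge1 kn var_gt0 s_gt0 s_ge.
have lam_max j : j != i0 -> lam j < lam i0 by move=> /centered_max; rewrite ltrD2r.
exists i0; split => //.
have [v v_neq0 Av] := eigenvalue_list_eigenvector i0 A_sym A_lam.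
rewrite addn1; apply: (eigenvector_sum_ge0 v_neq0 Av).
rewrite natrB ?(eigE i0 v) ?ltr_pM2r ?sum_sqr_col_gt0 //; last by lia.
by move=> j /lam_max /lt_eqF ->.
Qed.
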